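(* Let $f:\mathbb{R}\to\mathbb{R}$ and $g:\mathbb{R}\to\mathbb{R}$ be given with $\mathrm{Cr}(f)<\infty$, and let $\mathcal{I}_f$ denote the partition of $\mathbb{R}$ into the $\mathrm{Cr}(f)$ maximal intervals on which $\tilde f$ is constant. Then \[ \frac{1}{\mathrm{Cr}(f)}\sum_{U\in\mathcal{I}_f}\mathbf{1}\big[\forall x\in U:\ \tilde f(x)\neq\tilde g(x)\big]\ \ge\ \frac12\left(1-2\,\frac{\mathrm{Cr}(g)}{\mathrm{Cr}(f)}\right) \] (where the right-hand side is $-\infty$ if $\mathrm{Cr}(g)=\infty$).
   Context: For $h:\mathbb{R}\to\mathbb{R}$ let $\tilde h(x)=\mathbf{1}[h(x)\ge 1/2]$. The crossing number $\mathrm{Cr}(h)$ is the minimum number of intervals in a partition of $\mathbb{R}$ into intervals (possibly degenerate, unbounded, open, closed or half-open) on each of which $\tilde h$ is constant, i.e. the number of maximal intervals on which $\tilde h$ is constant. *)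

From Stdlib Require Import Reals Lra List ClassicalEpsilon.
Open Scope R_scope.

Definition tld (h : R -> R) (x : R) : bool :=
  if Rle_dec (1/2) (h x) then true else false.

(* intervals (possibly degenerate/unbounded/open/closed/half-open) = convex subsets *)
Definition is_interval (U : R -> Prop) : Prop :=
  forall x y z, U x -> U z -> x <= y <= z -> U y.

Definition const_on (h : R -> R) (U : R -> Prop) : Prop :=
  forall x y, U x -> U y -> tld h x = tld h y.

Definition maximal_interval (h : R -> R) (U : R -> Prop) : Prop :=
  (exists x, U x) /\ is_interval U /\ const_on h U /\
  forall V, is_interval V -> const_on h V -> (forall x, U x -> V x) ->
    forall x, V x -> U x.

Definition same_set (U V : R -> Prop) : Prop := forall x, U x <-> V x.

(* Us lists exactly the maximal intervals of h, each once (up to extensional equality):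
   this is the partition I_h. *)
Definition max_interval_list (h : R -> R) (Us : list (R -> Prop)) : Prop :=
  Forall (maximal_interval h) Us /\
  ForallOrdPairs (fun U V => ~ same_set U V) Us /\
  (forall U, maximal_interval h U -> Exists (same_set U) Us).

Definition crossing_number (h : R -> R) (n : nat) : Prop :=
  exists Us, max_interval_list h Us /\ length Us = n.

Definition indicP (P : Prop) : R :=
  if excluded_middle_informative P then 1 else 0.

From Stdlib Require Import Reals List Lra Lia Sorted Permutation Mergesort Orders ClassicalEpsilon.
Open Scope R_scope.

(* Pick in every maximal interval U of f̃ a representative point, one where
   f̃ and g̃ agree whenever U has such a point, so that U counts as a mismatch
   exactly when its representative does.  Listed in increasing order, two
   consecutive representatives lie in adjacent maximal intervals, hence f̃
   alternates along the list.  Between two consecutive representatives either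
   g̃ changes, which happens at most Cr(g) - 1 times along an increasing list,
   or one of the two is a mismatch.  Therefore Cr(f) <= 2 M + Cr(g), where M
   is the number of mismatched intervals, which is stronger than the claim. *)

Module RLeOrder <: TotalLeBool.
  Definition t := R.
  Definition leb (x y : R) : bool := if Rle_dec x y then true else false.
  Lemma leb_total x y : leb x y = true \/ leb y x = true.
  Proof. unfold leb; destruct (Rle_dec x y), (Rle_dec y x); auto; lra. Qed.
End RLeOrder.

Module RSort := Sort RLeOrder.

Lemma sorted_permutation (l : list R) :
  exists qs, Permutation l qs /\ StronglySorted Rle qs.
Proof.
  exists (RSort.sort l); split; [apply RSort.Permuted_sort|].
  assert (leb_trans : Transitive (fun x y => RLeOrder.leb x y = true)).
  { unfold RLeOrder.leb; intros x y z.
    destruct (Rle_dec x y), (Rle_dec y z), (Rle_dec x z); auto; lra. }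
  induction (RSort.StronglySorted_sort l leb_trans) as [|a t _ IH Ha];
    constructor; auto.
  refine (Forall_impl _ _ Ha).
  unfold RLeOrder.leb; intros y; destruct (Rle_dec a y); congruence.
Qed.

Lemma is_interval_union (U V : R -> Prop) a b :
  is_interval U -> is_interval V -> U a -> V b -> a <= b ->
  (forall z, a <= z <= b -> U z \/ V z) ->
  is_interval (fun x => U x \/ V x).
Proof.
  intros IU IV Ua Vb Hab Hgap x y z Hx Hz Hy.
  destruct (Rle_dec a y), (Rle_dec y b).
  - apply Hgap; lra.
  - destruct Hz as [Uz|Vz]; [left; apply (IU a y z)|right; apply (IV b y z)]; auto; lra.
  - destruct Hx as [Ux|Vx]; [left; apply (IU x y a)|right; apply (IV x y b)]; auto; lra.
  - lra.
Qed.

Lemma Sorted_of_gaps (P : R -> R -> Prop) (l : list R) :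
  StronglySorted Rle l -> NoDup l ->
  (forall a b, In a l -> In b l -> a < b ->
     (forall c, In c l -> c <= a \/ b <= c) -> P a b) ->
  Sorted P l.
Proof.
  induction l as [|a t IH]; intros Hs Hd HP; [constructor|].
  apply StronglySorted_inv in Hs as [Hs Ha]; rewrite Forall_forall in Ha.
  apply NoDup_cons_iff in Hd as [Hna Hd].
  constructor.
  - apply IH; auto.
    intros x y Hx Hy Hxy Hgap; apply HP; simpl; auto.
    intros c [<-|Hc]; auto.
  - destruct t as [|b t]; constructor.
    assert (Hb : forall c, In c (b :: t) -> b <= c).
    { apply StronglySorted_inv in Hs as [_ Hb]; rewrite Forall_forall in Hb.
      intros c [<-|Hc]; [lra|auto]. }
    assert (a <> b) by (intros ->; apply Hna; left; auto).
    assert (a <= b) by (apply Ha; left; auto).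
    apply HP; simpl; auto; [lra|].
    intros c [<-|Hc]; [left; lra|right; auto].
Qed.

Lemma NoDup_of_ForallOrdPairs {A : Type} (Rel : A -> A -> Prop) (l : list A) :
  ForallOrdPairs Rel l -> (forall x, ~ Rel x x) -> NoDup l.
Proof.
  intros Hl Hirr; induction Hl as [|x l Hx _ IH]; constructor; auto.
  rewrite Forall_forall in Hx; intro Hin; exact (Hirr x (Hx x Hin)).
Qed.

Section Components.
Variable h : R -> R.

Definition tld_component (x : R) : R -> Prop :=
  fun y => forall z, x <= z <= y \/ y <= z <= x -> tld h z = tld h x.

Lemma tld_component_self x : tld_component x x.
Proof. intros z Hz; replace z with x by lra; reflexivity. Qed.

Lemma maximal_interval_component x : maximal_interval h (tld_component x).
Proof.
  split; [exists x; apply tld_component_self|]; split; [|split].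
  - intros y1 y y2 H1 H2 Hy z Hz.
    destruct (Rle_dec x y); [apply H2|apply H1]; lra.
  - intros y1 y2 H1 H2; rewrite (H1 y1), (H2 y2); auto; lra.
  - intros V IV CV Hsub y Vy z Hz.
    assert (Vx : V x) by (apply Hsub, tld_component_self).
    apply CV; auto.
    destruct Hz; [apply (IV x z y)|apply (IV y z x)]; auto.
Qed.

Lemma maximal_interval_meet U V x :
  maximal_interval h U -> maximal_interval h V -> U x -> V x -> same_set U V.
Proof.
  intros [_ [IU [CU MU]]] [_ [IV [CV MV]]] Ux Vx.
  assert (IW : is_interval (fun y => U y \/ V y)).
  { apply (is_interval_union U V x x); auto; [lra|].
    intros z Hz; replace z with x by lra; auto. }
  assert (CW : const_on h (fun y => U y \/ V y)).
  { intros y1 y2 [H1|H1] [H2|H2]; auto.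
    - rewrite (CU y1 x), (CV x y2); auto.
    - rewrite (CV y1 x), (CU x y2); auto. }
  intro y; split; intro Hy.
  - apply (MV _ IW CW (fun y H => or_intror H)); auto.
  - apply (MU _ IW CW (fun y H => or_introl H)); auto.
Qed.

End Components.

Section Partition.
Variables (h : R -> R) (Us : list (R -> Prop)).
Hypothesis HUs : max_interval_list h Us.

Lemma partition_nonempty U : In U Us -> exists x, U x.
Proof.
  destruct HUs as [Hmax _]; rewrite Forall_forall in Hmax.
  intros HU; apply (Hmax U HU).
Qed.

Lemma partition_interval_const U : In U Us -> is_interval U /\ const_on h U.
Proof.
  destruct HUs as [Hmax _]; rewrite Forall_forall in Hmax.
  intros HU; destruct (Hmax U HU) as [_ [IU [CU _]]]; auto.
Qed.

Lemma partition_cover x : exists U, In U Us /\ U x.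
Proof.
  destruct HUs as [_ [_ Hcomplete]].
  destruct (proj1 (Exists_exists _ _) (Hcomplete _ (maximal_interval_component h x)))
    as [U [HU Hsame]].
  exists U; split; auto; apply Hsame, tld_component_self.
Qed.

Lemma partition_meet_eq U V x : In U Us -> In V Us -> U x -> V x -> U = V.
Proof.
  destruct HUs as [Hmax [Hdistinct _]]; rewrite Forall_forall in Hmax.
  intros HU HV Ux Vx.
  assert (Hsame : same_set U V) by (apply (maximal_interval_meet h U V x); auto).
  destruct (ForallOrdPairs_In Hdistinct U V HU HV) as [|[N|N]]; auto;
    exfalso; apply N; intro y; specialize (Hsame y); tauto.
Qed.

Lemma partition_NoDup : NoDup Us.
Proof.
  destruct HUs as [_ [Hdistinct _]].
  apply (NoDup_of_ForallOrdPairs _ _ Hdistinct); intros U N; apply N; intro; tauto.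
Qed.

Variable p : (R -> Prop) -> R.
Hypothesis p_in : forall U, In U Us -> U (p U).

Lemma representatives_NoDup : NoDup (map p Us).
Proof.
  apply NoDup_map_NoDup_ForallPairs; [|apply partition_NoDup].
  intros U V HU HV E; apply (partition_meet_eq U V (p U)); auto.
  - exact (p_in U HU).
  - rewrite E; exact (p_in V HV).
Qed.

Lemma adjacent_representatives_differ U V :
  In U Us -> In V Us -> p U < p V ->
  (forall W, In W Us -> p W <= p U \/ p V <= p W) ->
  tld h (p U) <> tld h (p V).
Proof.
  pose proof HUs as [Hmax _]; rewrite Forall_forall in Hmax.
  intros HU HV Hlt Hgap Heq.
  pose proof (p_in U HU) as UpU; pose proof (p_in V HV) as VpV.
  destruct (Hmax U HU) as [_ [IU [CU MU]]], (Hmax V HV) as [_ [IV [CV _]]].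
  assert (Hbetween : forall z, p U <= z <= p V -> U z \/ V z).
  { intros z Hz; destruct (partition_cover z) as [W [HW Wz]].
    destruct (Hmax W HW) as [_ [IW _]]; pose proof (p_in W HW) as WpW.
    destruct (Hgap W HW); [left|right].
    - rewrite <- (partition_meet_eq W U (p U)); auto.
      apply (IW (p W) (p U) z); auto; lra.
    - rewrite <- (partition_meet_eq W V (p V)); auto.
      apply (IW z (p V) (p W)); auto; lra. }
  assert (IUV : is_interval (fun x => U x \/ V x))
    by (apply (is_interval_union U V (p U) (p V)); auto; lra).
  assert (CUV : const_on h (fun x => U x \/ V x)).
  { assert (Hval : forall y, U y \/ V y -> tld h y = tld h (p U)).
    { intros y [Uy|Vy]; [apply CU|rewrite Heq; apply CV]; auto. }
    intros y1 y2 H1 H2; rewrite (Hval y1), (Hval y2); auto. }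
  assert (U (p V)) by (apply (MU _ IUV CUV (fun y H => or_introl H)); auto).
  assert (U = V) as -> by (apply (partition_meet_eq U V (p V)); auto).
  lra.
Qed.

Lemma sorted_representatives_alternate qs :
  Permutation (map p Us) qs -> StronglySorted Rle qs ->
  Sorted (fun a b => tld h a <> tld h b) qs.
Proof.
  intros Hperm Hsorted.
  assert (Hrep : forall a, In a qs -> exists U, In U Us /\ p U = a).
  { intros a Ha; apply (Permutation_in _ (Permutation_sym Hperm)), in_map_iff in Ha.
    destruct Ha as [U [E HU]]; eauto. }
  apply Sorted_of_gaps; auto.
  - exact (Permutation_NoDup Hperm representatives_NoDup).
  - intros a b Ha Hb Hab Hgap.
    destruct (Hrep a Ha) as [U [HU <-]], (Hrep b Hb) as [V [HV <-]].
    apply adjacent_representatives_differ; auto.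
    intros W HW; apply Hgap, (Permutation_in _ Hperm), in_map; auto.
Qed.

End Partition.

Definition mismatches (f g : R -> R) (l : list R) : nat :=
  list_sum (map (fun x => Nat.b2n (xorb (tld f x) (tld g x))) l).

Fixpoint changes (g : R -> R) (l : list R) : nat :=
  match l with
  | a :: (b :: _) as t => (Nat.b2n (xorb (tld g a) (tld g b)) + changes g t)%nat
  | _ => 0%nat
  end.

Lemma mismatches_cons f g a l :
  mismatches f g (a :: l) = (Nat.b2n (xorb (tld f a) (tld g a)) + mismatches f g l)%nat.
Proof. reflexivity. Qed.

(* The mismatch indicator of the head strengthens the induction: where f̃
   changes and g̃ does not, exactly one of the two neighbours is a mismatch. *)
Lemma alternating_length_le f g a t :
  Sorted (fun x y => tld f x <> tld f y) (a :: t) ->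
  (length (a :: t) + Nat.b2n (xorb (tld f a) (tld g a))
     <= 2 * mismatches f g (a :: t) + changes g (a :: t) + 1)%nat.
Proof.
  revert a; induction t as [|b t IH]; intros a Halt.
  - rewrite mismatches_cons; simpl; lia.
  - apply Sorted_inv in Halt as [Halt Hab]; apply HdRel_inv in Hab.
    specialize (IH b Halt).
    rewrite mismatches_cons.
    change (changes g (a :: b :: t))
      with (Nat.b2n (xorb (tld g a) (tld g b)) + changes g (b :: t))%nat.
    change (length (a :: b :: t)) with (S (length (b :: t))).
    destruct (tld f a), (tld f b), (tld g a), (tld g b); simpl in *;
      congruence || lia.
Qed.

Lemma changes_lt_cover g (Vs : list (R -> Prop)) a t :
  StronglySorted Rle (a :: t) ->
  (forall q, In q (a :: t) -> exists V, In V Vs /\ V q) ->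
  (forall V, In V Vs -> is_interval V /\ const_on g V) ->
  (changes g (a :: t) < length Vs)%nat.
Proof.
  revert a Vs; induction t as [|b t IH]; intros a Vs Hs Hcover HVs.
  - destruct (Hcover a) as [V [HV _]]; [left; auto|].
    destruct Vs; [destruct HV|simpl; lia].
  - apply StronglySorted_inv in Hs as [Hs Ha]; rewrite Forall_forall in Ha.
    change (changes g (a :: b :: t))
      with (Nat.b2n (xorb (tld g a) (tld g b)) + changes g (b :: t))%nat.
    destruct (xorb (tld g a) (tld g b)) eqn:Hchange; cbn [Nat.b2n Nat.add].
    2: { apply IH; auto; intros q Hq; apply Hcover; right; auto. }
    destruct (Hcover a) as [Va [HVa Va_a]]; [left; auto|].
    destruct (in_split _ _ HVa) as [A [B ->]].
    assert (Hcover' : forall q, In q (b :: t) -> exists V, In V (A ++ B) /\ V q).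
    { intros q Hq; destruct (Hcover q (or_intror Hq)) as [V [HV Vq]].
      apply in_app_or in HV as [HV|[<-|HV]].
      - exists V; split; auto; apply in_or_app; auto.
      - exfalso.
        destruct (HVs Va HVa) as [IVa CVa].
        assert (b <= q).
        { apply StronglySorted_inv in Hs as [_ Hb]; rewrite Forall_forall in Hb.
          destruct Hq as [<-|Hq]; [lra|auto]. }
        assert (Va b) by (apply (IVa a b q); auto; split; [apply Ha; left|]; auto).
        rewrite (CVa a b) in Hchange; auto; destruct (tld g b); discriminate.
      - exists V; split; auto; apply in_or_app; auto. }
    assert (changes g (b :: t) < length (A ++ B))%nat.
    { apply IH; auto; intros V HV; apply HVs, in_or_app.
      apply in_app_or in HV as [HV|HV]; [left|right; right]; auto. }
    rewrite !length_app in *; cbn [length] in *; lia.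
Qed.

Definition agreement_point (f g : R -> R) (U : R -> Prop) : R :=
  epsilon (inhabits 0)
    (fun x => U x /\ ((exists y, U y /\ tld f y = tld g y) -> tld f x = tld g x)).

Lemma agreement_point_spec f g U : (exists x, U x) ->
  U (agreement_point f g U) /\
  ((exists y, U y /\ tld f y = tld g y) ->
     tld f (agreement_point f g U) = tld g (agreement_point f g U)).
Proof.
  intros [x Ux]; unfold agreement_point; apply epsilon_spec.
  destruct (excluded_middle_informative (exists y, U y /\ tld f y = tld g y))
    as [[y [Uy Ey]]|N]; eauto.
  exists x; split; auto; tauto.
Qed.

Lemma indicator_sum_mismatches f g (Us : list (R -> Prop)) :
  (forall U, In U Us -> exists x, U x) ->
  fold_right Rplus 0 (map (fun U => indicP (forall x, U x -> tld f x <> tld g x)) Us)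
  = INR (mismatches f g (map (agreement_point f g) Us)).
Proof.
  induction Us as [|U Us IH]; intros Hne; [reflexivity|].
  cbn [map fold_right]; rewrite mismatches_cons, plus_INR, IH by (intros; apply Hne; right; auto).
  f_equal.
  destruct (agreement_point_spec f g U (Hne U (or_introl eq_refl))) as [HU Hagree].
  set (x := agreement_point f g U) in *.
  unfold indicP; destruct (excluded_middle_informative _) as [Hall|Hsome].
  - specialize (Hall x HU); destruct (tld f x), (tld g x); simpl; congruence.
  - destruct (excluded_middle_informative (exists y, U y /\ tld f y = tld g y))
      as [Hy|N].
    + rewrite (Hagree Hy); destruct (tld g x); reflexivity.
    + exfalso; apply Hsome; intros y Uy E; apply N; eauto.
Qed.

Lemma ratio_lower_bound (n c m : nat) : (0 < n)%nat -> (n <= 2 * c + m)%nat ->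
  / INR n * INR c >= 1/2 * (1 - 2 * (INR m / INR n)).
Proof.
  intros Hn Hle.
  apply lt_0_INR in Hn; apply le_INR in Hle; rewrite plus_INR, mult_INR in Hle.
  simpl (INR 2) in Hle.
  assert (0 <= INR m) by apply pos_INR.
  assert (E : / INR n * INR c - 1/2 * (1 - 2 * (INR m / INR n))
              = (2 * INR c + 2 * INR m - INR n) / (2 * INR n)) by (field; lra).
  assert (0 <= (2 * INR c + 2 * INR m - INR n) / (2 * INR n))
    by (apply Rmult_le_pos; [|apply Rlt_le, Rinv_0_lt_compat]; lra).
  lra.
Qed.

Theorem lemma3p1 (f g : R -> R) (Us : list (R -> Prop))
  (HUs : max_interval_list f Us) (m : nat) (Hg : crossing_number g m) :
  / INR (length Us) *
    fold_right Rplus 0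
      (map (fun U => indicP (forall x, U x -> tld f x <> tld g x)) Us)
  >= 1/2 * (1 - 2 * (INR m / INR (length Us))).
Proof.
  destruct Hg as [Vs [HVs <-]].
  pose proof (partition_nonempty f Us HUs) as Hne.
  rewrite (indicator_sum_mismatches f g Us Hne).
  set (p := agreement_point f g).
  assert (p_in : forall U, In U Us -> U (p U))
    by (intros U HU; apply agreement_point_spec, Hne, HU).
  destruct (sorted_permutation (map p Us)) as [qs [Hperm Hsorted]].
  assert (Hlen : length Us = length qs)
    by (rewrite <- (Permutation_length Hperm), length_map; reflexivity).
  assert (Hcount : mismatches f g (map p Us) = mismatches f g qs)
    by (unfold mismatches; now rewrite Hperm).
  rewrite Hlen, Hcount.
  destruct qs as [|a t].
  { destruct (partition_cover f Us HUs 0) as [U [HU _]].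
    apply (in_map p), (Permutation_in _ Hperm) in HU; destruct HU. }
  pose proof (alternating_length_le f g a t
    (sorted_representatives_alternate f Us HUs p p_in _ Hperm Hsorted)).
  assert (changes g (a :: t) < length Vs)%nat.
  { apply changes_lt_cover; auto.
    - intros q _; apply (partition_cover g Vs HVs).
    - apply (partition_interval_const g Vs HVs). }
  apply ratio_lower_bound; simpl length in *; lia.
Qed.
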